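(* Let $d\ge1$ and $m>d/2$, and let $a_1,a_2,a_3>0$. There exist constants $c_1,c_2,c_3,c_4>0$, depending only on $a_1,a_2,a_3,m,d$, such that for all $\lambda>0$, all nonnegative $P,Q,s,t$ and every positive integer $n$: if $$P^2+a_1\lambda Q^2\le a_2s\lambda P+a_3tn^{-1/2}P^{1-\frac{d}{2m}}Q^{\frac{d}{2m}},$$ then $$P\le c_1s\lambda\vee c_2tn^{-1/2}\lambda^{-\frac{d}{4m}},\qquad Q\le c_3s\lambda^{1/2}\vee c_4tn^{-1/2}\lambda^{-\frac{2m+d}{4m}}.$$
   Context: $a\vee b=\max\{a,b\}$. *)

From Stdlib Require Import Reals.
Open Scope R_scope.

(* Real power for nonnegative base x: x^y, with the convention 0^y = 0
   (appropriate for positive exponents y, which is the only use below). *)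
Definition rpow (x y : R) : R := if Req_EM_T x 0 then 0 else Rpower x y.

(* Put r = d/(2m), so 0 < r < 1.  If the linear term a2 s lam P dominates the
   right-hand side, then P^2 + a1 lam Q^2 <= 2 a2 s lam P, which bounds P by
   2 a2 s lam and then Q.  Otherwise P^2 + a1 lam Q^2 <= 2 K P^(1-r) Q^r with
   K = a3 t / sqrt n; splitting this into two inequalities and taking
   logarithms gives two linear inequalities in (ln P, ln Q), and eliminating
   one unknown gives P <= 2 K (a1 lam)^(-r/2) and Q <= 2 K (a1 lam)^(-(1+r)/2). *)

From Stdlib Require Import Reals Lra Psatz.
Open Scope R_scope.

Lemma Rpower_gt0 x y : 0 < Rpower x y.
Proof. apply exp_pos. Qed.

Lemma rpow_pos x y : 0 < x -> rpow x y = Rpower x y.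
Proof. intros Hx; unfold rpow; destruct (Req_EM_T x 0); [lra | reflexivity]. Qed.

Lemma rpow_ge0 x y : 0 <= rpow x y.
Proof. unfold rpow; destruct (Req_EM_T x 0); [lra | left; apply Rpower_gt0]. Qed.

Lemma rpow_0_l y : rpow 0 y = 0.
Proof. unfold rpow; destruct (Req_EM_T 0 0); [reflexivity | lra]. Qed.

Lemma ln_le x y : 0 < x -> x <= y -> ln x <= ln y.
Proof.
  intros Hx [Hxy | ->]; [left; apply ln_increasing |]; lra.
Qed.

Lemma ln_le_cancel x y : 0 < x -> 0 < y -> ln x <= ln y -> x <= y.
Proof.
  intros Hx Hy Hln; destruct (Rle_or_lt x y) as [| Hyx]; [assumption |].
  pose proof (ln_increasing y x Hy Hyx); lra.
Qed.

Lemma absorb_linear P Q b c :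
  0 <= P -> 0 <= Q -> 0 < b -> 0 <= c ->
  P ^ 2 + b * Q ^ 2 <= 2 * c * P -> P <= 2 * c /\ Q <= 2 * c / sqrt b.
Proof.
  intros HP HQ Hb Hc H.
  assert (HPc : P <= 2 * c) by nra.
  split; [assumption |].
  assert (Hsb : 0 < sqrt b) by (apply sqrt_lt_R0; lra).
  assert (Hsq : sqrt b * sqrt b = b) by (apply sqrt_sqrt; lra).
  apply (Rmult_le_reg_l (sqrt b)); [assumption |].
  replace (sqrt b * (2 * c / sqrt b)) with (2 * c) by (field; lra).
  nra.
Qed.

Section Interpolation.

Variable r : R.
Hypothesis r_gt0 : 0 < r.
Hypothesis r_lt1 : r < 1.

Lemma interpolation_log p q k b :
  (1 + r) * p <= k + r * q -> b + (2 - r) * q <= k + (1 - r) * p ->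
  2 * p <= 2 * k - r * b /\ 2 * q <= 2 * k - (1 + r) * b.
Proof.
  intros Hp Hq.
  (* (2 - r) times the first plus r times the second eliminates q;
     (1 - r) times the first plus (1 + r) times the second eliminates p. *)
  split; nra.
Qed.

Lemma interpolation_pow x y K b :
  0 < x -> 0 < y -> 0 < K -> 0 < b ->
  x * x <= K * Rpower x (1 - r) * Rpower y r ->
  b * (y * y) <= K * Rpower x (1 - r) * Rpower y r ->
  x <= K * Rpower b (- (r / 2)) /\ y <= K * Rpower b (- ((1 + r) / 2)).
Proof.
  intros Hx Hy HK Hb Hxx Hyy.
  assert (ln_rhs : ln (K * Rpower x (1 - r) * Rpower y r)
                   = ln K + (1 - r) * ln x + r * ln y).
  { rewrite !ln_mult, !ln_Rpower by (try apply Rmult_lt_0_compat; apply Rpower_gt0 || lra).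
    reflexivity. }
  apply ln_le in Hxx; [| nra].
  apply ln_le in Hyy; [| apply Rmult_lt_0_compat; [| apply Rmult_lt_0_compat]; assumption].
  rewrite ln_rhs, ln_mult in Hxx by lra.
  rewrite ln_rhs, !ln_mult in Hyy by (try apply Rmult_lt_0_compat; assumption).
  destruct (interpolation_log (ln x) (ln y) (ln K) (ln b)) as [Hlx Hly]; [lra | lra |].
  split; apply ln_le_cancel; try (apply Rmult_lt_0_compat; [| apply Rpower_gt0]); try lra;
    rewrite ln_mult, ln_Rpower by (apply Rpower_gt0 || lra); nra.
Qed.

Lemma interpolation_rpow P Q K b :
  0 <= P -> 0 <= Q -> 0 <= K -> 0 < b ->
  P ^ 2 + b * Q ^ 2 <= K * rpow P (1 - r) * rpow Q r ->
  P <= K * Rpower b (- (r / 2)) /\ Q <= K * Rpower b (- ((1 + r) / 2)).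
Proof.
  intros HP HQ HK Hb H.
  assert (Hdeg : K * rpow P (1 - r) * rpow Q r = 0 -> P = 0 /\ Q = 0).
  { intros E; rewrite E in H.
    assert (HQ2 : Q ^ 2 <= 0).
    { apply (Rmult_le_reg_l b); [assumption |]. rewrite Rmult_0_r. nra. }
    split; apply Rle_antisym; nra. }
  pose proof (Rpower_gt0 b (- (r / 2))); pose proof (Rpower_gt0 b (- ((1 + r) / 2))).
  destruct HP as [HP | <-]; [destruct HQ as [HQ | <-] |].
  - assert (HK' : 0 < K).
    { destruct HK as [| <-]; [assumption |].
      destruct Hdeg; [ring | lra]. }
    rewrite !rpow_pos in H by assumption.
    apply interpolation_pow; try assumption; nra.
  - rewrite rpow_0_l, Rmult_0_r in Hdeg.
    destruct Hdeg as [-> _]; [reflexivity |].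
    split; nra.
  - rewrite rpow_0_l, Rmult_0_r, Rmult_0_l in Hdeg.
    destruct Hdeg as [_ ->]; [reflexivity |].
    split; nra.
Qed.

Lemma interpolation_bound P Q b c K :
  0 <= P -> 0 <= Q -> 0 < b -> 0 <= c -> 0 <= K ->
  P ^ 2 + b * Q ^ 2 <= c * P + K * rpow P (1 - r) * rpow Q r ->
  P <= Rmax (2 * c) (2 * K * Rpower b (- (r / 2))) /\
  Q <= Rmax (2 * c / sqrt b) (2 * K * Rpower b (- ((1 + r) / 2))).
Proof.
  intros HP HQ Hb Hc HK H.
  pose proof (rpow_ge0 P (1 - r)); pose proof (rpow_ge0 Q r).
  destruct (Rle_or_lt (K * rpow P (1 - r) * rpow Q r) (c * P)) as [Hlin | Hsub].
  - destruct (absorb_linear P Q b c) as [HPb HQb]; try assumption; [lra |].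
    split; [apply (Rle_trans _ _ _ HPb) | apply (Rle_trans _ _ _ HQb)]; apply Rmax_l.
  - destruct (interpolation_rpow P Q (2 * K) b) as [HPb HQb]; try assumption; [lra | lra |].
    split; [apply (Rle_trans _ _ _ HPb) | apply (Rle_trans _ _ _ HQb)]; apply Rmax_r.
Qed.

End Interpolation.

Theorem lemmaA2 (d : nat) (m a1 a2 a3 : R) :
  (1 <= d)%nat -> INR d / 2 < m -> 0 < a1 -> 0 < a2 -> 0 < a3 ->
  exists c1 c2 c3 c4 : R, 0 < c1 /\ 0 < c2 /\ 0 < c3 /\ 0 < c4 /\
    forall (lam P Q s t : R) (n : nat),
      0 < lam -> 0 <= P -> 0 <= Q -> 0 <= s -> 0 <= t -> (1 <= n)%nat ->
      P ^ 2 + a1 * lam * Q ^ 2 <=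
        a2 * s * lam * P
        + a3 * t * / sqrt (INR n) * rpow P (1 - INR d / (2 * m)) * rpow Q (INR d / (2 * m)) ->
      P <= Rmax (c1 * s * lam) (c2 * t * / sqrt (INR n) * Rpower lam (- (INR d / (4 * m)))) /\
      Q <= Rmax (c3 * s * sqrt lam)
                (c4 * t * / sqrt (INR n) * Rpower lam (- ((2 * m + INR d) / (4 * m)))).
Proof.
  intros Hd Hm Ha1 Ha2 Ha3.
  assert (HD : 1 <= INR d) by (apply (le_INR 1); assumption).
  set (r := INR d / (2 * m)).
  assert (Hr0 : 0 < r) by (unfold r; apply Rdiv_lt_0_compat; lra).
  assert (Hr1 : r < 1) by (unfold r; apply (Rmult_lt_reg_r (2 * m)); [| field_simplify]; lra).
  replace (- (INR d / (4 * m))) with (- (r / 2)) by (unfold r; field; lra).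
  replace (- ((2 * m + INR d) / (4 * m))) with (- ((1 + r) / 2)) by (unfold r; field; lra).
  assert (Hsa1 : 0 < sqrt a1) by (apply sqrt_lt_R0; lra).
  exists (2 * a2), (2 * a3 * Rpower a1 (- (r / 2))), (2 * a2 / sqrt a1),
         (2 * a3 * Rpower a1 (- ((1 + r) / 2))).
  pose proof (Rpower_gt0 a1 (- (r / 2))) as Hc2.
  pose proof (Rpower_gt0 a1 (- ((1 + r) / 2))) as Hc4.
  split; [lra |]; split; [nra |]; split; [apply Rdiv_lt_0_compat; lra |]; split; [nra |].
  intros lam P Q s t n Hl HP HQ Hs Ht Hn H.
  assert (Hsn : 0 < sqrt (INR n)) by (apply sqrt_lt_R0, (lt_INR 0); lia).
  assert (HK : 0 <= a3 * t * / sqrt (INR n)).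
  { apply Rmult_le_pos; [nra | left; apply Rinv_0_lt_compat, Hsn]. }
  assert (Hb : 0 < a1 * lam) by (apply Rmult_lt_0_compat; lra).
  assert (Hc : 0 <= a2 * s * lam) by (apply Rmult_le_pos; [apply Rmult_le_pos |]; lra).
  destruct (interpolation_bound r Hr0 Hr1 _ _ _ _ _ HP HQ Hb Hc HK H) as [HPb HQb].
  replace (2 * a2 * s * lam) with (2 * (a2 * s * lam)) by ring.
  replace (2 * a2 / sqrt a1 * s * sqrt lam) with (2 * (a2 * s * lam) / sqrt (a1 * lam)).
  2: { assert (Hsl2 : sqrt lam * sqrt lam = lam) by (apply sqrt_sqrt; lra).
       assert (0 < sqrt lam) by (apply sqrt_lt_R0; lra).
       rewrite sqrt_mult, <- Hsl2 at 1 by lra; field; lra. }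
  replace (2 * a3 * Rpower a1 (- (r / 2)) * t * / sqrt (INR n) * Rpower lam (- (r / 2)))
    with (2 * (a3 * t * / sqrt (INR n)) * Rpower (a1 * lam) (- (r / 2)))
    by (rewrite <- Rpower_mult_distr by lra; ring).
  replace (2 * a3 * Rpower a1 (- ((1 + r) / 2)) * t * / sqrt (INR n)
           * Rpower lam (- ((1 + r) / 2)))
    with (2 * (a3 * t * / sqrt (INR n)) * Rpower (a1 * lam) (- ((1 + r) / 2)))
    by (rewrite <- Rpower_mult_distr by lra; ring).
  split; assumption.
Qed.
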